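(* Let $X$ be a real Banach space having a strong atom $u\in S_X$ which is also a big point. Then $X$ is isometrically isomorphic to $\ell^1(\Gamma)$ for some set $\Gamma$.
   Context: $\mathcal{G}_X$ is the group of surjective linear isometries (rotations) of $X$; $u\in S_X$ is a big point if $\overline{\mathrm{conv}}(\{T(u):T\in\mathcal{G}_X\})=B_X$. For a closed subspace $Y\subset X$, a continuous linear surjective projection $P: X\to Y$ is an isometric reflection projection if $I-2P\in\mathcal{G}_X$; $Y$ is then an isometric reflection subspace. A point $u\in S_X$ is a strong atom if (1) the one-dimensional subspace $[u]$ is an isometric reflection subspace, and (2) for every closed subspace $Y\subset X$ and every isometric reflection projection $P:X\to Y$, either $P(u)=u$ or $P(u)=0$. *)

From Stdlib Require Import Reals List.
Open Scope R_scope.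

Record Banach := {
  car :> Type;
  vzero : car;
  vadd : car -> car -> car;
  vopp : car -> car;
  vscal : R -> car -> car;
  vnorm : car -> R;
  vadd_assoc : forall x y z, vadd x (vadd y z) = vadd (vadd x y) z;
  vadd_comm : forall x y, vadd x y = vadd y x;
  vadd_0 : forall x, vadd x vzero = x;
  vadd_opp : forall x, vadd x (vopp x) = vzero;
  vscal_1 : forall x, vscal 1 x = x;
  vscal_assoc : forall a b x, vscal a (vscal b x) = vscal (a * b) x;
  vscal_distr_v : forall a x y, vscal a (vadd x y) = vadd (vscal a x) (vscal a y);
  vscal_distr_s : forall a b x, vscal (a + b) x = vadd (vscal a x) (vscal b x);
  vnorm_eq0 : forall x, vnorm x = 0 -> x = vzero;
  vnorm_scal : forall a x, vnorm (vscal a x) = Rabs a * vnorm x;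
  vnorm_triangle : forall x y, vnorm (vadd x y) <= vnorm x + vnorm y;
  vcomplete : forall s : nat -> car,
     (forall eps, 0 < eps -> exists N, forall m n, (N <= m)%nat -> (N <= n)%nat ->
          vnorm (vadd (s m) (vopp (s n))) < eps) ->
     exists l, forall eps, 0 < eps -> exists N, forall n, (N <= n)%nat ->
          vnorm (vadd (s n) (vopp l)) < eps
}.

Arguments vzero {b0}.
Arguments vadd {b0}.
Arguments vopp {b0}.
Arguments vscal {b0}.
Arguments vnorm {b0}.

Section BanachDefs.
Variable X : Banach.

Definition vsub (x y : X) : X := vadd x (vopp y).

Definition S_X (x : X) : Prop := vnorm x = 1.
Definition B_X (x : X) : Prop := vnorm x <= 1.

Definition is_linear (T : X -> X) : Prop :=
  forall a b x y, T (vadd (vscal a x) (vscal b y)) = vadd (vscal a (T x)) (vscal b (T y)).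

Definition is_continuous (T : X -> X) : Prop :=
  forall x eps, 0 < eps -> exists delta, 0 < delta /\
    forall y, vnorm (vsub y x) < delta -> vnorm (vsub (T y) (T x)) < eps.

Definition rotation (T : X -> X) : Prop :=
  is_linear T /\ (forall x, vnorm (T x) = vnorm x) /\ (forall y, exists x, T x = y).

Definition vcomb (l : list (R * X)) : X :=
  fold_right (fun p acc => vadd (vscal (fst p) (snd p)) acc) vzero l.

Definition conv (A : X -> Prop) (x : X) : Prop :=
  exists l : list (R * X),
    Forall (fun p => 0 <= fst p /\ A (snd p)) l /\
    fold_right (fun p acc => fst p + acc) 0 l = 1 /\
    x = vcomb l.

Definition closure (A : X -> Prop) (x : X) : Prop :=
  forall eps, 0 < eps -> exists y, A y /\ vnorm (vsub x y) < eps.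

Definition orbit (u : X) (x : X) : Prop := exists T, rotation T /\ x = T u.

Definition big_point (u : X) : Prop :=
  S_X u /\ forall x, closure (conv (orbit u)) x <-> B_X x.

Definition closed_subspace (Y : X -> Prop) : Prop :=
  Y vzero /\
  (forall a b x y, Y x -> Y y -> Y (vadd (vscal a x) (vscal b y))) /\
  (forall x, closure Y x -> Y x).

Definition projection_onto (P : X -> X) (Y : X -> Prop) : Prop :=
  is_linear P /\ is_continuous P /\
  (forall x, Y (P x)) /\ (forall y, Y y -> exists x, P x = y) /\
  (forall x, P (P x) = P x).

Definition isometric_reflection_projection (P : X -> X) (Y : X -> Prop) : Prop :=
  closed_subspace Y /\ projection_onto P Y /\
  rotation (fun x => vsub x (vscal 2 (P x))).

Definition isometric_reflection_subspace (Y : X -> Prop) : Prop :=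
  exists P, isometric_reflection_projection P Y.

Definition span1 (u : X) (x : X) : Prop := exists a : R, x = vscal a u.

Definition strong_atom (u : X) : Prop :=
  S_X u /\
  isometric_reflection_subspace (span1 u) /\
  (forall (Y : X -> Prop) (P : X -> X), isometric_reflection_projection P Y ->
      P u = u \/ P u = vzero).

End BanachDefs.

Definition finsum_abs {G : Type} (f : G -> R) (l : list G) : R :=
  fold_right (fun g acc => Rabs (f g) + acc) 0 l.

Definition l1_partial_sums {G : Type} (f : G -> R) (s : R) : Prop :=
  exists l : list G, NoDup l /\ s = finsum_abs f l.

Definition in_l1 {G : Type} (f : G -> R) : Prop :=
  exists M, forall l : list G, NoDup l -> finsum_abs f l <= M.

Definition l1_norm_is {G : Type} (f : G -> R) (r : R) : Prop :=
  is_lub (l1_partial_sums f) r.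

Definition isometric_iso_l1 (X : Banach) (G : Type) (T : X -> (G -> R)) : Prop :=
  (forall a b (x y : X) g,
      T (vadd (vscal a x) (vscal b y)) g = a * T x g + b * T y g) /\
  (forall x : X, in_l1 (T x) /\ l1_norm_is (T x) (vnorm x)) /\
  (forall x y : X, T x = T y -> x = y) /\
  (forall f : G -> R, in_l1 f -> exists x : X, T x = f).

(* Every rotation T carries the reflection projection onto the line [u] to a
   reflection projection onto the line [T u]; since u is a strong atom, every reflection
   projection fixes or kills every point of the orbit of u.  Hence the coordinate
   functionals [coord w] attached to orbit points w are biorthogonal: [coord v w = 0]
   unless [w = v] or [w = -v].  Taking Gamma to be the orbit modulo sign, the map
   x |-> (coord v x)_v is the isomorphism:
   - the finite coordinate sums are at most the norm, because the big point norms every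
     bounded functional that is at most 1 on the orbit (lower estimate);
   - vectors expanded in finitely many coordinates are dense (convex hulls of the orbit
     are dense in the ball), which gives the reverse inequality (upper estimate);
   - every summable coefficient family is realized, by completeness. *)
From Pilot Require Import Defs.
From Stdlib Require Import Reals List Lra Lia ClassicalEpsilon Classical
  FunctionalExtensionality PropExtensionality ProofIrrelevance.
Open Scope R_scope.

Arguments vadd_assoc {b0}.
Arguments vadd_comm {b0}.
Arguments vadd_0 {b0}.
Arguments vadd_opp {b0}.
Arguments vscal_1 {b0}.
Arguments vscal_assoc {b0}.
Arguments vscal_distr_v {b0}.
Arguments vscal_distr_s {b0}.
Arguments vnorm_eq0 {b0}.
Arguments vnorm_scal {b0}.
Arguments vnorm_triangle {b0}.
Arguments vcomplete {b0}.

Section ListSums.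
Context {A : Type}.

Definition sumL (h : A -> R) (l : list A) : R := fold_right (fun v acc => h v + acc) 0 l.

Lemma sumL_app (h : A -> R) l1 l2 : sumL h (l1 ++ l2) = sumL h l1 + sumL h l2.
Proof. induction l1 as [|a l IH]; simpl; [ring|]. rewrite IH. ring. Qed.

Lemma sumL_add (h h' : A -> R) l : sumL (fun v => h v + h' v) l = sumL h l + sumL h' l.
Proof. induction l as [|a l IH]; simpl; [ring|]. rewrite IH. ring. Qed.

Lemma sumL_mul (c : R) (h : A -> R) l : sumL (fun v => c * h v) l = c * sumL h l.
Proof. induction l as [|a l IH]; simpl; [ring|]. rewrite IH. ring. Qed.

Lemma sumL_le (h h' : A -> R) l :
  (forall v, In v l -> h v <= h' v) -> sumL h l <= sumL h' l.
Proof.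
  induction l as [|a l IH]; simpl; intros H; [lra|].
  pose proof (H a (or_introl eq_refl)). pose proof (IH (fun v Hv => H v (or_intror Hv))). lra.
Qed.

Lemma sumL_ext (h h' : A -> R) l : (forall v, In v l -> h v = h' v) -> sumL h l = sumL h' l.
Proof. intros H. apply Rle_antisym; apply sumL_le; intros v Hv; rewrite (H v Hv); lra. Qed.

Lemma sumL_nonneg (h : A -> R) l : (forall v, 0 <= h v) -> 0 <= sumL h l.
Proof. intros H. induction l as [|a l IH]; simpl; [lra|]. pose proof (H a). lra. Qed.

Lemma sumL_zero (h : A -> R) l : (forall v, In v l -> h v = 0) -> sumL h l = 0.
Proof.
  induction l as [|a l IH]; simpl; intros H; [reflexivity|].
  rewrite H, IH by auto. ring.
Qed.

Lemma sumL_const (c : R) (l : list A) : sumL (fun _ => c) l = INR (length l) * c.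
Proof. induction l as [|a l IH]; [simpl; ring|]. cbn [sumL fold_right length] in *.
  fold (sumL (fun _ => c) l). rewrite IH, S_INR. ring. Qed.

Lemma sumL_single (h : A -> R) l r : NoDup l -> In r l ->
  (forall v, In v l -> v <> r -> h v = 0) -> sumL h l = h r.
Proof.
  induction l as [|a l IH]; intros ND Hr H; [destruct Hr|]. inversion ND; subst. simpl.
  destruct (classic (a = r)) as [<-|Ha].
  - rewrite sumL_zero; [ring|]. intros v Hv. apply H; [now right|]. intros ->. contradiction.
  - rewrite (H a (or_introl eq_refl) Ha), IH; auto; [ring| |].
    + destruct Hr; [contradiction|assumption].
    + intros v Hv. apply H. now right.
Qed.

Lemma sumL_atmost1 (h : A -> R) l : NoDup l -> (forall v, h v <= 1) ->
  (forall v1 v2, h v1 <> 0 -> h v2 <> 0 -> v1 = v2) -> sumL h l <= 1.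
Proof.
  induction l as [|a l IH]; intros ND H1 H2; simpl; [lra|]. inversion ND; subst.
  destruct (Req_dec (h a) 0) as [E|E].
  - rewrite E. pose proof (IH H4 H1 H2). lra.
  - rewrite sumL_zero; [pose proof (H1 a); lra|].
    intros v Hv. destruct (Req_dec (h v) 0) as [Z|Z]; [exact Z|].
    pose proof (H2 a v E Z). subst. contradiction.
Qed.

Lemma sumL_incl (h : A -> R) (l1 l2 : list A) : (forall v, 0 <= h v) ->
  NoDup l1 -> NoDup l2 -> incl l1 l2 -> sumL h l1 <= sumL h l2.
Proof.
  intros Hh. revert l2. induction l1 as [|a l1 IH]; intros l2 N1 N2 Hi.
  - apply sumL_nonneg, Hh.
  - inversion N1; subst. assert (Ha : In a l2) by (apply Hi; now left).
    destruct (in_split _ _ Ha) as [B1 [B2 ->]].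
    destruct (NoDup_remove _ _ _ N2) as [N2' _].
    assert (Hs : sumL h l1 <= sumL h (B1 ++ B2)).
    { apply IH; auto. intros v Hv. assert (Hv' : In v (B1 ++ a :: B2)) by (apply Hi; now right).
      apply in_app_or in Hv'. apply in_or_app. destruct Hv' as [Hv'|[Hv'|Hv']]; auto.
      subst. contradiction. }
    rewrite sumL_app in Hs |- *. simpl. lra.
Qed.

End ListSums.

Section VectorAlgebra.
Variable X : Banach.
Local Notation vsub := (vsub X).

Lemma vadd_0l (x : X) : vadd vzero x = x.
Proof. rewrite vadd_comm; apply vadd_0. Qed.

Lemma vadd_oppl (x : X) : vadd (vopp x) x = vzero.
Proof. rewrite vadd_comm; apply vadd_opp. Qed.

Lemma vadd_cancel_l (x y z : X) : vadd x y = vadd x z -> y = z.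
Proof.
  intro H. assert (H1 : vadd (vopp x) (vadd x y) = vadd (vopp x) (vadd x z)) by now rewrite H.
  rewrite !vadd_assoc, vadd_oppl, !vadd_0l in H1. exact H1.
Qed.

Lemma vscal_0 (x : X) : vscal 0 x = vzero.
Proof.
  apply (vadd_cancel_l (vscal 0 x)). rewrite <- vscal_distr_s, vadd_0.
  now replace (0 + 0) with 0 by ring.
Qed.

Lemma vopp_scal (x : X) : vopp x = vscal (-1) x.
Proof.
  apply (vadd_cancel_l x). rewrite vadd_opp. rewrite <- (vscal_1 x) at 1.
  rewrite <- vscal_distr_s. replace (1 + -1) with 0 by ring. now rewrite vscal_0.
Qed.

Lemma vscal_zero (a : R) : vscal a (@vzero X) = vzero.
Proof. rewrite <- (vscal_0 vzero), vscal_assoc. now rewrite Rmult_0_r. Qed.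

Lemma vnorm_0 : vnorm (@vzero X) = 0.
Proof. rewrite <- (vscal_0 vzero), vnorm_scal, Rabs_R0; ring. Qed.

Lemma vnorm_opp (x : X) : vnorm (vopp x) = vnorm x.
Proof. rewrite vopp_scal, vnorm_scal, Rabs_left by lra. ring. Qed.

Lemma vnorm_nonneg (x : X) : 0 <= vnorm x.
Proof.
  pose proof (vnorm_triangle x (vopp x)) as H. rewrite vadd_opp, vnorm_0, vnorm_opp in H. lra.
Qed.

Lemma vopp_add (x y : X) : vopp (vadd x y) = vadd (vopp x) (vopp y).
Proof. rewrite !vopp_scal. apply vscal_distr_v. Qed.

Lemma vopp_opp (x : X) : vopp (vopp x) = x.
Proof. rewrite !vopp_scal, vscal_assoc. replace (-1 * -1) with 1 by ring. apply vscal_1. Qed.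

Lemma vscal_opp (a : R) (x : X) : vscal a (vopp x) = vopp (vscal a x).
Proof. rewrite !vopp_scal, !vscal_assoc. f_equal; ring. Qed.

Lemma vsub_self (x : X) : vsub x x = vzero.
Proof. apply vadd_opp. Qed.

Lemma vsub_0 (x : X) : vsub x vzero = x.
Proof. unfold vsub. rewrite vopp_scal, vscal_zero. apply vadd_0. Qed.

Lemma vsub_eq0 (x y : X) : vsub x y = vzero -> x = y.
Proof.
  intro H. assert (H1 : vadd (vsub x y) y = vadd vzero y) by now rewrite H.
  unfold vsub in H1. rewrite <- vadd_assoc, vadd_oppl, vadd_0, vadd_0l in H1. exact H1.
Qed.

Lemma vadd_sub (x y : X) : vsub (vadd x y) y = x.
Proof. unfold vsub. rewrite <- vadd_assoc, vadd_opp, vadd_0. reflexivity. Qed.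

Lemma vsub_scal (a : R) (x y : X) : vscal a (vsub x y) = vsub (vscal a x) (vscal a y).
Proof. unfold vsub. rewrite vscal_distr_v, vscal_opp. reflexivity. Qed.

Lemma vnorm_sub_sym (x y : X) : vnorm (vsub x y) = vnorm (vsub y x).
Proof.
  rewrite <- vnorm_opp. unfold vsub. rewrite vopp_add, vopp_opp, vadd_comm. reflexivity.
Qed.

Lemma vnorm_sub_triangle (x y z : X) :
  vnorm (vsub x z) <= vnorm (vsub x y) + vnorm (vsub y z).
Proof.
  replace (vsub x z) with (vadd (vsub x y) (vsub y z)); [apply vnorm_triangle|].
  unfold vsub. rewrite <- vadd_assoc, (vadd_assoc (vopp y)), vadd_oppl, vadd_0l. reflexivity.
Qed.

Lemma vscal_sub_s (a b : R) (x : X) : vscal (a - b) x = vsub (vscal a x) (vscal b x).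
Proof.
  unfold vsub, Rminus. rewrite vscal_distr_s, vopp_scal, vscal_assoc. do 2 f_equal. ring.
Qed.

Lemma vscal_inj (a b : R) (x : X) : x <> vzero -> vscal a x = vscal b x -> a = b.
Proof.
  intros Hx H.
  assert (H1 : vnorm (vscal (a - b) x) = 0) by (rewrite vscal_sub_s, H, vsub_self; apply vnorm_0).
  rewrite vnorm_scal in H1. apply Rmult_integral in H1. destruct H1 as [H1|H1].
  - destruct (Req_dec a b) as [E|E]; [exact E|]. pose proof (Rabs_pos_lt (a - b)). lra.
  - exfalso; apply Hx, vnorm_eq0, H1.
Qed.

Lemma vnormalize (x : X) :
  x = vscal (vnorm x + 1) (vscal (/ (vnorm x + 1)) x) /\
  vnorm (vscal (/ (vnorm x + 1)) x) <= 1.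
Proof.
  pose proof (vnorm_nonneg x). split.
  - rewrite vscal_assoc, Rinv_r by lra. symmetry; apply vscal_1.
  - rewrite vnorm_scal, Rabs_right by (apply Rle_ge, Rlt_le, Rinv_0_lt_compat; lra).
    apply (Rmult_le_reg_l (vnorm x + 1)); [lra|].
    rewrite <- Rmult_assoc, Rinv_r by lra. lra.
Qed.

Lemma vcomplete_rate (s : nat -> X) (e : nat -> R) :
  (forall n m, (n <= m)%nat -> vnorm (vsub (s m) (s n)) <= e n) ->
  (forall eps, 0 < eps -> exists N, forall n, (N <= n)%nat -> e n < eps) ->
  exists x, forall n, vnorm (vsub (s n) x) <= e n.
Proof.
  intros Hc He. destruct (vcomplete s) as [x Hx].
  - intros eps Heps. destruct (He eps Heps) as [N HN]. exists N. intros m n Hm Hn.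
    fold (vsub (s m) (s n)). destruct (Nat.le_ge_cases n m) as [H|H].
    + pose proof (Hc n m H). pose proof (HN n Hn). lra.
    + rewrite vnorm_sub_sym. pose proof (Hc m n H). pose proof (HN m Hm). lra.
  - exists x. intros n. apply Rle_plus_epsilon. intros eps Heps.
    destruct (Hx eps Heps) as [N HN].
    pose proof (vnorm_sub_triangle (s n) (s (Nat.max n N)) x).
    rewrite (vnorm_sub_sym (s n) (s (Nat.max n N))) in H.
    pose proof (Hc n _ (Nat.le_max_l n N)). pose proof (HN _ (Nat.le_max_r n N)).
    unfold vsub in *. lra.
Qed.

Definition vsumL {A : Type} (F : A -> X) (l : list A) : X :=
  fold_right (fun v acc => vadd (F v) acc) vzero l.

Lemma vsumL_app {A} (F : A -> X) l1 l2 : vsumL F (l1 ++ l2) = vadd (vsumL F l1) (vsumL F l2).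
Proof.
  induction l1 as [|v l IH]; simpl; [symmetry; apply vadd_0l|].
  fold (vsumL F l). fold (vsumL F (l ++ l2)). rewrite IH. apply vadd_assoc.
Qed.

Lemma vsumL_ext {A} (F F' : A -> X) l :
  (forall v, In v l -> F v = F' v) -> vsumL F l = vsumL F' l.
Proof.
  induction l as [|v l IH]; simpl; intros H; [reflexivity|].
  rewrite H, IH by auto. reflexivity.
Qed.

Lemma vsumL_add {A} (F F' : A -> X) l :
  vsumL (fun v => vadd (F v) (F' v)) l = vadd (vsumL F l) (vsumL F' l).
Proof.
  induction l as [|v l IH]; simpl; [symmetry; apply vadd_0|].
  fold (vsumL F l). fold (vsumL F' l). fold (vsumL (fun v => vadd (F v) (F' v)) l). rewrite IH.
  rewrite <- !vadd_assoc. f_equal. rewrite !vadd_assoc. f_equal. apply vadd_comm.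
Qed.

Lemma vsumL_scal {A} (a : R) (F : A -> X) l :
  vsumL (fun v => vscal a (F v)) l = vscal a (vsumL F l).
Proof.
  induction l as [|v l IH]; simpl; [symmetry; apply vscal_zero|].
  fold (vsumL F l). fold (vsumL (fun v => vscal a (F v)) l). rewrite IH, vscal_distr_v.
  reflexivity.
Qed.

Lemma vsumL_zero {A} (F : A -> X) l : (forall v, In v l -> F v = vzero) -> vsumL F l = vzero.
Proof.
  induction l as [|v l IH]; simpl; intros H; [reflexivity|].
  rewrite H, IH by auto. apply vadd_0.
Qed.

Lemma vsumL_single {A} (F : A -> X) l r : NoDup l -> In r l ->
  (forall v, In v l -> v <> r -> F v = vzero) -> vsumL F l = F r.
Proof.
  induction l as [|a l IH]; intros ND Hr H; [destruct Hr|]. inversion ND; subst. simpl.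
  fold (vsumL F l). destruct (classic (a = r)) as [<-|Ha].
  - rewrite vsumL_zero; [apply vadd_0|]. intros v Hv. apply H; [now right|].
    intros ->. contradiction.
  - rewrite (H a (or_introl eq_refl) Ha), vadd_0l. apply IH; auto.
    + destruct Hr; [contradiction|assumption].
    + intros v Hv. apply H. now right.
Qed.

Lemma vsumL_norm {A} (F : A -> X) l : vnorm (vsumL F l) <= sumL (fun v => vnorm (F v)) l.
Proof.
  induction l as [|v l IH]; simpl; [rewrite vnorm_0; lra|].
  fold (vsumL F l). eapply Rle_trans; [apply vnorm_triangle|]. fold (sumL (fun v => vnorm (F v)) l). lra.
Qed.

End VectorAlgebra.

Section Rotations.
Variable X : Banach.
Local Notation vsub := (vsub X).
Local Notation rotation := (rotation X).
Local Notation is_linear := (is_linear X).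

Lemma lin_add (T : X -> X) : is_linear T -> forall x y, T (vadd x y) = vadd (T x) (T y).
Proof. intros HT x y. pose proof (HT 1 1 x y) as H. rewrite !vscal_1 in H. exact H. Qed.

Lemma lin_scal (T : X -> X) : is_linear T -> forall a x, T (vscal a x) = vscal a (T x).
Proof. intros HT a x. pose proof (HT a 0 x x) as H. rewrite !vscal_0, !vadd_0 in H. exact H. Qed.

Lemma lin_0 (T : X -> X) : is_linear T -> T vzero = vzero.
Proof. intros HT. rewrite <- (vscal_0 X vzero), lin_scal by exact HT. rewrite !vscal_0. reflexivity. Qed.

Lemma lin_sub (T : X -> X) : is_linear T -> forall x y, T (vsub x y) = vsub (T x) (T y).
Proof.
  intros HT x y. unfold Defs.vsub. rewrite lin_add, !vopp_scal, lin_scal by exact HT.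
  reflexivity.
Qed.

Lemma rotation_comp (A B : X -> X) : rotation A -> rotation B -> rotation (fun x => A (B x)).
Proof.
  intros [AL [AN AS]] [BL [BN BS]]. split; [|split].
  - intros a b x y. rewrite BL, AL. reflexivity.
  - intros x. rewrite AN, BN. reflexivity.
  - intros y. destruct (AS y) as [z <-]. destruct (BS z) as [x <-]. exists x. reflexivity.
Qed.

Lemma rotation_inj (T : X -> X) : rotation T -> forall x y, T x = T y -> x = y.
Proof.
  intros [TL [TN _]] x y H. apply vsub_eq0, vnorm_eq0.
  rewrite <- TN, lin_sub, H, vsub_self by exact TL. apply vnorm_0.
Qed.

Lemma rotation_opp : rotation (fun x => vopp x).
Proof.
  split; [|split].
  - intros a b x y. rewrite vopp_add, !vscal_opp. reflexivity.
  - apply vnorm_opp.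
  - intros y. exists (vopp y). apply vopp_opp.
Qed.

Definition rinv (T : X -> X) (y : X) : X := epsilon (inhabits vzero) (fun x => T x = y).

Lemma rinv_r (T : X -> X) : rotation T -> forall y, T (rinv T y) = y.
Proof. intros HT y. unfold rinv. apply epsilon_spec, HT. Qed.

Lemma rinv_l (T : X -> X) : rotation T -> forall x, rinv T (T x) = x.
Proof. intros HT x. apply (rotation_inj T HT), rinv_r, HT. Qed.

Lemma rotation_rinv (T : X -> X) : rotation T -> rotation (rinv T).
Proof.
  intros HT. pose proof HT as [TL [TN _]]. split; [|split].
  - intros a b x y. apply (rotation_inj T HT). rewrite TL, !rinv_r by exact HT. reflexivity.
  - intros x. rewrite <- TN, rinv_r by exact HT. reflexivity.
  - intros y. exists (T y). apply rinv_l, HT.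
Qed.

End Rotations.

(** Reflection projections: linear idempotents [P] such that [I - 2P] is a rotation.
    These are exactly the isometric reflection projections onto their range. *)
Section ReflectionProjections.
Variable X : Banach.
Local Notation vsub := (vsub X).
Local Notation rotation := (rotation X).

Definition reflection_projection (P : X -> X) : Prop :=
  is_linear X P /\ (forall x, P (P x) = P x) /\ rotation (fun x => vsub x (vscal 2 (P x))).

(* [2 P x = x - (I - 2P) x], so [P] is a contraction. *)
Lemma refl_proj_contraction (P : X -> X) : reflection_projection P ->
  forall x, vnorm (P x) <= vnorm x.
Proof.
  intros [_ [_ [_ [RN _]]]] x.
  assert (E : vsub x (vsub x (vscal 2 (P x))) = vscal 2 (P x)).
  { unfold Defs.vsub. rewrite vopp_add, vopp_opp, vadd_assoc, vadd_opp. apply vadd_0l. }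
  pose proof (vnorm_sub_triangle X x vzero (vsub x (vscal 2 (P x)))) as T.
  rewrite E, vnorm_scal, Rabs_right, vsub_0, (vnorm_sub_sym X vzero), vsub_0, RN in T by lra.
  lra.
Qed.

Lemma refl_proj_irp (P : X -> X) : reflection_projection P ->
  isometric_reflection_projection X P (fun y => P y = y).
Proof.
  intros HP. pose proof HP as [PL [PP PR]]. pose proof (refl_proj_contraction P HP) as PB.
  split; [|split; [|exact PR]].
  - split; [|split].
    + apply lin_0, PL.
    + intros a b x y Hx Hy. rewrite PL, Hx, Hy. reflexivity.
    + intros x Hx. apply vsub_eq0, vnorm_eq0, Rle_antisym; [|apply vnorm_nonneg].
      apply Rnot_lt_le. intros Hlt.
      destruct (Hx (vnorm (vsub (P x) x) / 2)) as [y [Py Hy]]; [lra|].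
      pose proof (vnorm_sub_triangle X (P x) (P y) x) as T.
      pose proof (PB (vsub x y)) as B. rewrite lin_sub, Py in B by exact PL.
      rewrite Py, (vnorm_sub_sym X y x) in T. lra.
  - split; [exact PL|split; [|split; [|split]]].
    + intros x eps He. exists eps. split; [exact He|]. intros y Hy.
      rewrite <- lin_sub by exact PL. eapply Rle_lt_trans; [apply PB|exact Hy].
    + intros x. apply PP.
    + intros y Hy. exists y. exact Hy.
    + exact PP.
Qed.

Lemma irp_refl_proj (P : X -> X) (Y : X -> Prop) :
  isometric_reflection_projection X P Y -> reflection_projection P.
Proof. intros [_ [[PL [_ [_ [_ PP]]]] PR]]. split; [exact PL|split; assumption]. Qed.

Lemma refl_proj_conj (A B P : X -> X) : rotation A -> rotation B ->
  (forall x, A (B x) = x) -> reflection_projection P ->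
  reflection_projection (fun x => A (P (B x))).
Proof.
  intros HA HB AB [PL [PP PR]]. pose proof HA as [AL _]. pose proof HB as [BL _].
  assert (BA : forall y, B (A y) = y) by (intros y; apply (rotation_inj X A HA), AB).
  split; [|split].
  - intros a b x y. rewrite BL, PL, AL. reflexivity.
  - intros x. rewrite BA, PP. reflexivity.
  - replace (fun x => vsub x (vscal 2 (A (P (B x)))))
      with (fun x => A ((fun z => vsub z (vscal 2 (P z))) (B x))).
    + apply rotation_comp; [exact HA|]. apply (rotation_comp X _ B PR HB).
    + apply functional_extensionality. intros x. rewrite lin_sub, lin_scal, AB by exact AL.
      reflexivity.
Qed.

End ReflectionProjections.

Section Functionals.
Variable X : Banach.
Local Notation vsub := (vsub X).

Definition lin_fun (F : X -> R) : Prop :=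
  forall a b x y, F (vadd (vscal a x) (vscal b y)) = a * F x + b * F y.

Lemma lf_add (F : X -> R) : lin_fun F -> forall x y, F (vadd x y) = F x + F y.
Proof. intros H x y. pose proof (H 1 1 x y) as E. rewrite !vscal_1 in E. lra. Qed.

Lemma lf_scal (F : X -> R) : lin_fun F -> forall a x, F (vscal a x) = a * F x.
Proof. intros H a x. pose proof (H a 0 x x) as E. rewrite vscal_0, vadd_0 in E. lra. Qed.

Lemma lf_0 (F : X -> R) : lin_fun F -> F vzero = 0.
Proof. intros H. rewrite <- (vscal_0 X vzero), lf_scal by exact H. ring. Qed.

Lemma lf_sub (F : X -> R) : lin_fun F -> forall x y, F (vsub x y) = F x - F y.
Proof. intros H x y. unfold Defs.vsub. rewrite lf_add, vopp_scal, lf_scal by exact H. ring. Qed.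

Lemma lf_vsumL {A : Type} (F : X -> R) (V : A -> X) l : lin_fun F ->
  F (vsumL X V l) = sumL (fun v => F (V v)) l.
Proof.
  intros HF. induction l as [|v l IH]; simpl; [apply lf_0, HF|].
  rewrite lf_add by exact HF. fold (vsumL X V l). rewrite IH. reflexivity.
Qed.

Lemma lf_conv_le (F : X -> R) (S : X -> Prop) : lin_fun F ->
  (forall w, S w -> F w <= 1) -> forall y, conv X S y -> F y <= 1.
Proof.
  intros HF HS y [l [Hl [Hsum ->]]]. rewrite <- Hsum. clear Hsum.
  induction Hl as [|[c w] l [Hc Hw] _ IH]; simpl in *.
  - rewrite lf_0 by exact HF. lra.
  - unfold Defs.vcomb in *. rewrite lf_add, lf_scal by exact HF.
    pose proof (Rmult_le_compat_l c _ _ Hc (HS w Hw)). lra.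
Qed.

Lemma lf_closure_le (F : X -> R) (L : R) (S : X -> Prop) : lin_fun F -> 0 <= L ->
  (forall x, F x <= L * vnorm x) -> (forall w, S w -> F w <= 1) ->
  forall y, closure X S y -> F y <= 1.
Proof.
  intros HF HL0 HL HS y Hy. apply Rnot_lt_le. intros Hlt.
  set (d := (F y - 1) / (L + 1)).
  assert (Hd : 0 < d) by (apply Rdiv_lt_0_compat; lra).
  destruct (Hy d Hd) as [z [Hz Hyz]].
  pose proof (HL (vsub y z)) as B. rewrite lf_sub in B by exact HF.
  pose proof (HS z Hz). pose proof (Rmult_le_compat_l L _ _ HL0 (Rlt_le _ _ Hyz)).
  assert (Ld : L * d = (F y - 1) - d) by (unfold d; field; lra).
  lra.
Qed.

Lemma lf_ball_le_norm (F : X -> R) : lin_fun F ->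
  (forall y, vnorm y <= 1 -> F y <= 1) -> forall x, F x <= vnorm x.
Proof.
  intros HF HB x. destruct (Req_dec (vnorm x) 0) as [E|E].
  - apply vnorm_eq0 in E. subst. rewrite lf_0, vnorm_0 by exact HF. lra.
  - pose proof (vnorm_nonneg X x) as Hn.
    assert (Ex : x = vscal (vnorm x) (vscal (/ vnorm x) x)).
    { rewrite vscal_assoc, Rinv_r by exact E. symmetry; apply vscal_1. }
    assert (Hu : F (vscal (/ vnorm x) x) <= 1).
    { apply HB. rewrite vnorm_scal, Rabs_right.
      - rewrite Rinv_l by exact E. lra.
      - apply Rle_ge, Rlt_le, Rinv_0_lt_compat. lra. }
    rewrite Ex at 1. rewrite lf_scal by exact HF.
    pose proof (Rmult_le_compat_l (vnorm x) _ _ Hn Hu). lra.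
Qed.

Lemma big_point_norming (u : X) (F : X -> R) (L : R) : big_point X u -> lin_fun F -> 0 <= L ->
  (forall x, F x <= L * vnorm x) -> (forall w, orbit X u w -> F w <= 1) ->
  forall x, F x <= vnorm x.
Proof.
  intros [_ Hball] HF HL0 HL HO. apply lf_ball_le_norm; [exact HF|].
  intros y Hy. apply (lf_closure_le F L (conv X (orbit X u))); auto.
  - apply lf_conv_le; assumption.
  - apply Hball, Hy.
Qed.

End Functionals.

Section L1Exhaustion.
Context {A : Type}.

Definition rate (n : nat) : R := / INR (S n).

Lemma rate_pos (n : nat) : 0 < rate n.
Proof. apply Rinv_0_lt_compat, lt_0_INR. lia. Qed.

Lemma rate_small (e : R) : 0 < e -> exists N, forall n, (N <= n)%nat -> rate n < e.
Proof.
  intros He. destruct (archimed_cor1 e He) as [N [HN HN0]]. exists N. intros n Hn.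
  eapply Rle_lt_trans; [|exact HN]. apply Rinv_le_contravar; [apply lt_0_INR; exact HN0|].
  apply le_INR. lia.
Qed.

Lemma finsum_abs_sumL (f : A -> R) l : finsum_abs f l = sumL (fun v => Rabs (f v)) l.
Proof. reflexivity. Qed.

Lemma l1_sup (f : A -> R) : in_l1 f -> exists Ms,
  (forall l, NoDup l -> finsum_abs f l <= Ms) /\
  (forall e, 0 < e -> exists l, NoDup l /\ Ms - e < finsum_abs f l).
Proof.
  intros [M HM].
  destruct (completeness (l1_partial_sums f)) as [Ms [Hub Hleast]].
  - exists M. intros s [l [Hl ->]]. apply HM, Hl.
  - exists 0. exists nil. split; [constructor|reflexivity].
  - exists Ms. split.
    + intros l Hl. apply Hub. exists l. auto.
    + intros e He. apply NNPP. intros Hn. assert (Ms <= Ms - e); [|lra].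
      apply Hleast. intros s [l [Hl ->]]. apply Rnot_lt_le. intros Hlt. apply Hn. exists l. auto.
Qed.

Lemma nested_cover (P : nat -> list A) : (forall n, NoDup (P n)) -> exists L : nat -> list A,
  (forall n, NoDup (L n)) /\ (forall n, incl (P n) (L n)) /\
  (forall n m, (n <= m)%nat -> exists D, L m = L n ++ D).
Proof.
  intros HP.
  set (fresh := fun (l : list A) (v : A) =>
         if excluded_middle_informative (In v l) then false else true).
  assert (Hfresh : forall l v, fresh l v = true <-> ~ In v l).
  { intros l v. unfold fresh. destruct (excluded_middle_informative (In v l)); split;
      easy. }
  set (L := fix L (n : nat) : list A := match n with
          | O => P O
          | S k => L k ++ filter (fresh (L k)) (P (S k)) end).
  exists L. split; [|split].
  - induction n as [|n IH]; [apply HP|]. simpl. apply NoDup_app; [exact IH| |].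
    + apply NoDup_filter, HP.
    + intros a Ha Hb. apply filter_In, proj2, Hfresh in Hb. contradiction.
  - destruct n as [|n]; [apply incl_refl|]. intros v Hv. simpl. apply in_or_app.
    destruct (classic (In v (L n))) as [Hi|Hi]; [now left|right].
    apply filter_In. split; [exact Hv|]. apply Hfresh, Hi.
  - intros n m Hnm. induction Hnm as [|m _ [D ED]].
    + exists nil. symmetry. apply app_nil_r.
    + exists (D ++ filter (fresh (L m)) (P (S m))). simpl. rewrite ED, app_assoc. reflexivity.
Qed.

Lemma l1_exhaustion (f : A -> R) : in_l1 f -> exists L : nat -> list A,
  (forall n, NoDup (L n)) /\
  (forall n m, (n <= m)%nat -> exists D, L m = L n ++ D) /\
  (forall n l, NoDup (L n ++ l) -> finsum_abs f l < rate n).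
Proof.
  intros Hf. destruct (l1_sup f Hf) as [Ms [Hub Happ]].
  destruct (choice (fun n l => NoDup l /\ Ms - rate n < finsum_abs f l)) as [P HP].
  { intros n. apply Happ, rate_pos. }
  destruct (nested_cover P (fun n => proj1 (HP n))) as [L [HND [Hincl Hpre]]].
  exists L. split; [exact HND|split; [exact Hpre|]].
  intros n l Hl. pose proof (Hub _ Hl) as Hall.
  assert (Hbig : finsum_abs f (P n) <= finsum_abs f (L n)).
  { rewrite !finsum_abs_sumL. apply sumL_incl; auto. intros v; apply Rabs_pos. apply HP. }
  rewrite finsum_abs_sumL, sumL_app in Hall. rewrite !finsum_abs_sumL in *.
  pose proof (proj2 (HP n)). rewrite finsum_abs_sumL in *. lra.
Qed.

End L1Exhaustion.

Section StrongAtom.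
Variable X : Banach.
Variable u : X.
Hypothesis Hatom : strong_atom X u.
Local Notation vsub := (vsub X).
Local Notation rotation := (rotation X).
Local Notation orbit := (orbit X u).

Lemma atom_nz : u <> vzero.
Proof. intros E. pose proof (proj1 Hatom) as N. unfold S_X in N. rewrite E, vnorm_0 in N. lra. Qed.

Lemma orbit_norm (w : X) : orbit w -> vnorm w = 1.
Proof. intros [T [[_ [TN _]] ->]]. rewrite TN. apply Hatom. Qed.

Lemma orbit_nz (w : X) : orbit w -> w <> vzero.
Proof. intros H E. apply orbit_norm in H. rewrite E, vnorm_0 in H. lra. Qed.

Lemma orbit_opp (w : X) : orbit w -> orbit (vopp w).
Proof.
  intros [T [HT ->]]. exists (fun x => vopp (T x)). split; [|reflexivity].
  apply (rotation_comp X (fun x => vopp x) T); [apply rotation_opp|exact HT].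
Qed.

Lemma orbit_dichotomy (P : X -> X) (w : X) : orbit w -> reflection_projection X P ->
  P w = w \/ P w = vzero.
Proof.
  intros [T [HT ->]] HP.
  assert (HQ : reflection_projection X (fun x => rinv X T (P (T x)))).
  { apply refl_proj_conj; try assumption; [apply rotation_rinv, HT|apply rinv_l, HT]. }
  destruct Hatom as [_ [_ Hdich]].
  destruct (Hdich _ _ (refl_proj_irp X _ HQ)) as [E|E]; apply (f_equal T) in E;
    rewrite rinv_r in E by exact HT; [left|right]; rewrite E; [reflexivity|apply lin_0, HT].
Qed.

Definition atom_proj : X -> X := epsilon (inhabits (fun x => x))
  (fun P => isometric_reflection_projection X P (span1 X u)).

Lemma atom_proj_spec : isometric_reflection_projection X atom_proj (span1 X u).
Proof. unfold atom_proj. apply epsilon_spec, Hatom. Qed.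

Definition atom_coord (x : X) : R := epsilon (inhabits 0) (fun a => atom_proj x = vscal a u).

Lemma atom_coord_spec (x : X) : atom_proj x = vscal (atom_coord x) u.
Proof.
  unfold atom_coord. apply epsilon_spec. destruct atom_proj_spec as [_ [[_ [_ [H _]]] _]].
  destruct (H x) as [a Ha]. exists a. exact Ha.
Qed.

Lemma atom_coord_lin : lin_fun X atom_coord.
Proof.
  intros a b x y. apply (vscal_inj X _ _ u atom_nz). rewrite <- atom_coord_spec.
  destruct atom_proj_spec as [_ [[PL _] _]].
  rewrite PL, !atom_coord_spec, !vscal_assoc, vscal_distr_s. reflexivity.
Qed.

Lemma atom_coord_bound (x : X) : Rabs (atom_coord x) <= vnorm x.
Proof.
  pose proof (refl_proj_contraction X _ (irp_refl_proj X _ _ atom_proj_spec) x) as H.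
  rewrite atom_coord_spec, vnorm_scal in H. rewrite (proj1 Hatom) in H. lra.
Qed.

Lemma atom_coord_u : atom_coord u = 1.
Proof.
  destruct atom_proj_spec as [_ [[_ [_ [_ [Hsurj Hidem]]]] _]].
  destruct (Hsurj u) as [x Hx]; [exists 1; symmetry; apply vscal_1|].
  apply (vscal_inj X _ _ u atom_nz). rewrite <- atom_coord_spec, vscal_1, <- Hx. apply Hidem.
Qed.

Definition transport (w : X) : X -> X :=
  epsilon (inhabits (fun x => x)) (fun T => rotation T /\ w = T u).

Lemma transport_spec (w : X) : orbit w -> rotation (transport w) /\ w = transport w u.
Proof. intros H. unfold transport. apply epsilon_spec, H. Qed.

Definition coord (w : X) (x : X) : R := atom_coord (rinv X (transport w) x).

Lemma coord_lin (w : X) : orbit w -> lin_fun X (coord w).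
Proof.
  intros H a b x y. unfold coord. destruct (transport_spec w H) as [HT _].
  destruct (rotation_rinv X _ HT) as [RL _]. rewrite RL. apply atom_coord_lin.
Qed.

Lemma coord_bound (w x : X) : orbit w -> Rabs (coord w x) <= vnorm x.
Proof.
  intros H. unfold coord. destruct (transport_spec w H) as [HT _].
  destruct (rotation_rinv X _ HT) as [_ [RN _]]. rewrite <- RN. apply atom_coord_bound.
Qed.

Lemma coord_self (w : X) : orbit w -> coord w w = 1.
Proof.
  intros H. unfold coord. destruct (transport_spec w H) as [HT E].
  rewrite E at 2. rewrite rinv_l by exact HT. apply atom_coord_u.
Qed.

(* [x |-> coord w x * w] is the conjugate of [atom_proj], a reflection projection. *)
Lemma coord_refl_proj (w : X) : orbit w ->
  reflection_projection X (fun x => vscal (coord w x) w).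
Proof.
  intros H. destruct (transport_spec w H) as [HT E].
  replace (fun x => vscal (coord w x) w)
    with (fun x => transport w (atom_proj (rinv X (transport w) x))).
  - apply refl_proj_conj; [exact HT|apply rotation_rinv, HT|apply rinv_r, HT|].
    exact (irp_refl_proj X _ _ atom_proj_spec).
  - apply functional_extensionality. intros x. rewrite atom_coord_spec.
    rewrite (lin_scal X _ (proj1 HT)), <- E. reflexivity.
Qed.

Lemma coord_orbit_nz (v w : X) : orbit v -> orbit w -> coord v w <> 0 ->
  w = v \/ w = vopp v.
Proof.
  intros Hv Hw Hnz.
  destruct (orbit_dichotomy _ w Hw (coord_refl_proj v Hv)) as [E|E].
  - pose proof (f_equal vnorm E) as N. rewrite vnorm_scal, !orbit_norm in N by assumption.
    destruct (Rle_dec 0 (coord v w)); [left|right]; rewrite <- E.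
    + rewrite Rabs_right in N by lra. replace (coord v w) with 1 by lra. apply vscal_1.
    + rewrite Rabs_left in N by lra. replace (coord v w) with (-1) by lra.
      symmetry; apply vopp_scal.
  - exfalso. apply Hnz, (vscal_inj X _ _ v (orbit_nz v Hv)). rewrite E, vscal_0. reflexivity.
Qed.


(* The index set: orbit points modulo sign, represented by a canonical choice [rep w]
   in [{w, -w}] which depends only on that pair. *)
Definition rep (w : X) : X := epsilon (inhabits vzero) (fun z => z = w \/ z = vopp w).

Lemma rep_spec (w : X) : rep w = w \/ rep w = vopp w.
Proof. unfold rep. apply epsilon_spec. exists w. now left. Qed.

Lemma rep_opp (w : X) : rep (vopp w) = rep w.
Proof.
  unfold rep. f_equal. apply functional_extensionality. intros z.
  apply propositional_extensionality. rewrite vopp_opp. tauto.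
Qed.

Lemma rep_rep (w : X) : rep (rep w) = rep w.
Proof. destruct (rep_spec w) as [E|E]; rewrite E at 1; [reflexivity|apply rep_opp]. Qed.

Lemma rep_orbit (w : X) : orbit w -> orbit (rep w).
Proof. intros H. destruct (rep_spec w) as [E|E]; rewrite E; [exact H|apply orbit_opp, H]. Qed.

Definition atoms : Type := {v : X | orbit v /\ rep v = v}.

Definition to_atom (w : X) (H : orbit w) : atoms :=
  exist _ (rep w) (conj (rep_orbit w H) (rep_rep w)).

Lemma to_atom_sign (w : X) (H : orbit w) : exists s, w = vscal s (proj1_sig (to_atom w H)).
Proof.
  simpl. destruct (rep_spec w) as [E|E]; rewrite E.
  - exists 1. symmetry. apply vscal_1.
  - exists (-1). rewrite <- vopp_scal. symmetry. apply vopp_opp.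
Qed.

Lemma atom_eq (v1 v2 : atoms) : proj1_sig v1 = proj1_sig v2 -> v1 = v2.
Proof. destruct v1, v2; simpl. intros ->. f_equal. apply proof_irrelevance. Qed.

Lemma atom_orbit (v : atoms) : orbit (proj1_sig v).
Proof. apply (proj2_sig v). Qed.

Definition acoord (v : atoms) (x : X) : R := coord (proj1_sig v) x.

Lemma acoord_lin (v : atoms) : lin_fun X (acoord v).
Proof. apply coord_lin, atom_orbit. Qed.

Lemma acoord_bound (v : atoms) (x : X) : Rabs (acoord v x) <= vnorm x.
Proof. apply coord_bound, atom_orbit. Qed.

Lemma acoord_self (v : atoms) : acoord v (proj1_sig v) = 1.
Proof. apply coord_self, atom_orbit. Qed.

Lemma acoord_support (v : atoms) (w : X) : orbit w -> acoord v w <> 0 ->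
  proj1_sig v = rep w.
Proof.
  intros Hw N. rewrite <- (proj2 (proj2_sig v)).
  destruct (coord_orbit_nz _ w (atom_orbit v) Hw N) as [->| ->]; [reflexivity|].
  symmetry. apply rep_opp.
Qed.

Lemma acoord_other (v w : atoms) : v <> w -> acoord v (proj1_sig w) = 0.
Proof.
  intros N. destruct (Req_dec (acoord v (proj1_sig w)) 0) as [E|E]; [exact E|].
  exfalso. apply N, atom_eq. rewrite (acoord_support v _ (atom_orbit w) E).
  apply (proj2 (proj2_sig w)).
Qed.

Definition atom_sum (h : atoms -> R) (l : list atoms) : X :=
  vsumL X (fun v => vscal (h v) (proj1_sig v)) l.

Lemma acoord_atom_sum (v : atoms) h l :
  acoord v (atom_sum h l) = sumL (fun w => h w * acoord v (proj1_sig w)) l.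
Proof. unfold atom_sum. rewrite lf_vsumL by apply acoord_lin. apply sumL_ext.
  intros w _. apply lf_scal, acoord_lin. Qed.

Lemma acoord_atom_sum_in (v : atoms) h l : NoDup l -> In v l -> acoord v (atom_sum h l) = h v.
Proof.
  intros ND Hv. rewrite acoord_atom_sum, (sumL_single _ l v ND Hv).
  - rewrite acoord_self. ring.
  - intros w _ N. rewrite acoord_other by congruence. ring.
Qed.

Lemma acoord_atom_sum_out (v : atoms) h l : ~ In v l -> acoord v (atom_sum h l) = 0.
Proof.
  intros Hv. rewrite acoord_atom_sum. apply sumL_zero. intros w Hw.
  rewrite acoord_other by congruence. ring.
Qed.

Lemma atom_sum_norm h l : vnorm (atom_sum h l) <= finsum_abs h l.
Proof.
  eapply Rle_trans; [apply vsumL_norm|]. rewrite finsum_abs_sumL. apply sumL_le.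
  intros v _. rewrite vnorm_scal, orbit_norm by apply atom_orbit. lra.
Qed.

Definition expansion (y : X) (l : list atoms) : Prop :=
  NoDup l /\ y = atom_sum (fun v => acoord v y) l.

Lemma expansion_atom_sum h l : NoDup l -> expansion (atom_sum h l) l.
Proof.
  intros ND. split; [exact ND|]. apply vsumL_ext. intros v Hv.
  rewrite acoord_atom_sum_in by assumption. reflexivity.
Qed.

Lemma expansion_norm (y : X) l : expansion y l -> vnorm y <= finsum_abs (fun v => acoord v y) l.
Proof. intros [_ E]. rewrite E at 1. apply atom_sum_norm. Qed.

Lemma expansion_scal (a : R) (y : X) l : expansion y l -> expansion (vscal a y) l.
Proof.
  intros [ND E]. split; [exact ND|]. rewrite E at 1. unfold atom_sum.
  rewrite <- vsumL_scal. apply vsumL_ext. intros v _.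
  rewrite vscal_assoc, lf_scal by apply acoord_lin. reflexivity.
Qed.

Lemma expansion_add_orbit (y w : X) (c : R) l : expansion y l -> orbit w ->
  exists l', expansion (vadd y (vscal c w)) l'.
Proof.
  intros [ND Ey] Hw. set (r := to_atom w Hw). destruct (to_atom_sign w Hw) as [s Es].
  fold r in Es. set (h := fun v => acoord v y + c * s * acoord v (proj1_sig r)).
  assert (Eh : forall l0, atom_sum h l0 =
            vadd (atom_sum (fun v => acoord v y) l0)
                 (vscal (c * s) (atom_sum (fun v => acoord v (proj1_sig r)) l0))).
  { intros l0. unfold atom_sum. rewrite <- vsumL_scal, <- vsumL_add. apply vsumL_ext.
    intros v _. unfold h. rewrite vscal_assoc, vscal_distr_s. reflexivity. }
  assert (Ew : vadd y (vscal c w) = vadd y (vscal (c * s) (proj1_sig r)))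
    by (rewrite Es, vscal_assoc; reflexivity).
  destruct (classic (In r l)) as [Hr|Hr].
  - exists l. rewrite Ew. replace (vadd y (vscal (c * s) (proj1_sig r))) with (atom_sum h l).
    + apply expansion_atom_sum, ND.
    + rewrite Eh, <- Ey. unfold atom_sum. rewrite (vsumL_single X _ l r ND Hr).
      * rewrite acoord_self, vscal_1. reflexivity.
      * intros v _ N. rewrite acoord_other, vscal_0 by exact N. reflexivity.
  - exists (r :: l). rewrite Ew. replace (vadd y (vscal (c * s) (proj1_sig r))) with (atom_sum h (r :: l)).
    + apply expansion_atom_sum. constructor; assumption.
    + change (atom_sum h (r :: l)) with (vadd (vscal (h r) (proj1_sig r)) (atom_sum h l)).
      rewrite Eh, <- Ey. unfold h. rewrite acoord_self, Ey, acoord_atom_sum_out by exact Hr.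
      rewrite <- Ey. unfold atom_sum. rewrite vsumL_zero.
      * rewrite vscal_zero, vadd_0, Rplus_0_l, Rmult_1_r. apply vadd_comm.
      * intros v Hv. rewrite acoord_other, vscal_0 by congruence. reflexivity.
Qed.

Lemma conv_expansion (y : X) : conv X orbit y -> exists l, expansion y l.
Proof.
  intros [L [HL [_ ->]]]. induction HL as [|[c w] L [_ Hw] _ [l IH]].
  - exists nil. split; [constructor|reflexivity].
  - simpl in Hw. change (vcomb X ((c, w) :: L)) with (vadd (vscal c w) (vcomb X L)).
    rewrite vadd_comm. exact (expansion_add_orbit _ w c l IH Hw).
Qed.

Hypothesis Hbig : big_point X u.

(* The signed sum
   of the coordinates is a bounded functional which is at most 1 on the orbit (an orbit
   point has at most one nonzero coordinate), so the big point norms it. *)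
Lemma acoord_sum_le_norm (x : X) (l : list atoms) : NoDup l ->
  finsum_abs (fun v => acoord v x) l <= vnorm x.
Proof.
  intros ND.
  set (sg := fun v => if Rle_dec 0 (acoord v x) then 1 else -1).
  set (phi := fun y => sumL (fun v => sg v * acoord v y) l).
  assert (Hsg : forall v y, sg v * acoord v y <= Rabs (acoord v y)).
  { intros v y. unfold sg. destruct (Rle_dec 0 (acoord v x)).
    - pose proof (Rle_abs (acoord v y)). lra.
    - pose proof (Rle_abs (- acoord v y)). rewrite Rabs_Ropp in *. lra. }
  assert (Hphi : lin_fun X phi).
  { intros a b y z. unfold phi. rewrite <- !sumL_mul, <- sumL_add. apply sumL_ext.
    intros v _. rewrite acoord_lin. ring. }
  replace (finsum_abs (fun v => acoord v x) l) with (phi x).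
  - apply (big_point_norming X u phi (INR (length l)) Hbig Hphi (pos_INR _)).
    + intros y. unfold phi. rewrite <- sumL_const. apply sumL_le. intros v _.
      eapply Rle_trans; [apply Hsg|apply acoord_bound].
    + intros w Hw. apply sumL_atmost1; [exact ND| |].
      * intros v. eapply Rle_trans; [apply Hsg|].
        rewrite <- (orbit_norm w Hw). apply acoord_bound.
      * intros v1 v2 N1 N2. apply atom_eq.
        rewrite (acoord_support v1 w Hw), (acoord_support v2 w Hw); [reflexivity| |];
          intros E; [apply N2|apply N1]; rewrite E; ring.
  - rewrite finsum_abs_sumL. apply sumL_ext. intros v _. unfold sg.
    destruct (Rle_dec 0 (acoord v x)).
    + rewrite Rabs_right by lra. ring.
    + rewrite Rabs_left by lra. ring.
Qed.

(* Expanded vectors are dense: scale [x] into the unit ball, approximate it by a convex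
   combination of orbit points, and scale back. *)
Lemma expansion_dense (x : X) (eps : R) : 0 < eps ->
  exists y l, expansion y l /\ vnorm (vsub x y) < eps.
Proof.
  intros He. destruct (vnormalize X x) as [Ex Hball].
  assert (Ht : 0 < vnorm x + 1) by (pose proof (vnorm_nonneg X x); lra).
  set (t := vnorm x + 1) in *.
  destruct (proj2 (proj2 Hbig _) Hball (eps / t)) as [z [Hz Hxz]];
    [apply Rdiv_lt_0_compat; lra|].
  destruct (conv_expansion z Hz) as [l Hl]. exists (vscal t z), l.
  split; [apply expansion_scal, Hl|].
  rewrite Ex at 1. rewrite <- vsub_scal, vnorm_scal, Rabs_right by lra.
  apply (Rmult_lt_compat_l t) in Hxz; [|lra].
  replace (t * (eps / t)) with eps in Hxz by (field; lra). exact Hxz.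
Qed.

Lemma norm_le_acoord_sums (x : X) (b : R) :
  (forall l, NoDup l -> finsum_abs (fun v => acoord v x) l <= b) -> vnorm x <= b.
Proof.
  intros Hb. apply Rle_plus_epsilon. intros eps He.
  destruct (expansion_dense x (eps / 2)) as [y [l [Hy Hxy]]]; [lra|].
  assert (Hsplit : finsum_abs (fun v => acoord v y) l <=
            finsum_abs (fun v => acoord v x) l + finsum_abs (fun v => acoord v (vsub y x)) l).
  { rewrite !finsum_abs_sumL, <- sumL_add. apply sumL_le. intros v _.
    replace (acoord v y) with (acoord v x + acoord v (vsub y x))
      by (rewrite lf_sub by apply acoord_lin; ring).
    apply Rabs_triang. }
  pose proof (expansion_norm y l Hy). pose proof (Hb l (proj1 Hy)).
  pose proof (acoord_sum_le_norm (vsub y x) l (proj1 Hy)).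
  pose proof (vnorm_sub_triangle X x y vzero). rewrite !vsub_0 in *.
  rewrite (vnorm_sub_sym X y x) in *. lra.
Qed.

(* Every summable family of coefficients is the coordinate family of some vector: the
   partial sums along an exhausting chain form a Cauchy sequence. *)
Lemma acoord_surjective (f : atoms -> R) : in_l1 f -> exists x, forall v, acoord v x = f v.
Proof.
  intros Hf. destruct (l1_exhaustion f Hf) as [L [HND [Hpre Htail]]].
  set (s := fun n => atom_sum f (L n)).
  destruct (vcomplete_rate X s rate) as [x Hx]; [|exact rate_small|].
  { intros n m Hnm. destruct (Hpre n m Hnm) as [D ED]. unfold s. rewrite ED.
    unfold atom_sum. rewrite vsumL_app, vadd_comm, vadd_sub. fold (atom_sum f D).
    eapply Rle_trans; [apply atom_sum_norm|]. apply Rlt_le, Htail. rewrite <- ED. apply HND. }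
  exists x. intros v.
  enough (Hd : Rabs (acoord v x - f v) <= 0).
  { pose proof (Rle_abs (acoord v x - f v)). pose proof (Rle_abs (- (acoord v x - f v))).
    rewrite Rabs_Ropp in *. lra. }
  apply Rle_plus_epsilon. intros eps He. destruct (rate_small (eps / 2)) as [n Hn]; [lra|].
  specialize (Hn n (le_n n)).
  assert (Hs : Rabs (acoord v (s n) - f v) <= rate n).
  { unfold s. destruct (classic (In v (L n))) as [Hi|Hi].
    - rewrite acoord_atom_sum_in by auto. rewrite Rminus_diag, Rabs_R0. apply Rlt_le, rate_pos.
    - rewrite acoord_atom_sum_out by exact Hi. rewrite Rminus_0_l, Rabs_Ropp.
      apply Rlt_le. specialize (Htail n (v :: nil)). simpl in Htail. rewrite Rplus_0_r in Htail.
      apply Htail, NoDup_app; [apply HND|repeat constructor; easy|].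
      intros a Ha [<-|[]]. contradiction. }
  pose proof (acoord_bound v (vsub x (s n))) as Hb. rewrite lf_sub in Hb by apply acoord_lin.
  rewrite (vnorm_sub_sym X x) in Hb. pose proof (Hx n).
  pose proof (Rabs_triang (acoord v x - acoord v (s n)) (acoord v (s n) - f v)).
  replace (acoord v x - acoord v (s n) + (acoord v (s n) - f v)) with (acoord v x - f v) in * by ring.
  lra.
Qed.

End StrongAtom.

Theorem theorem4p1 (X : Banach) (u : X) :
  strong_atom X u -> big_point X u ->
  exists (G : Type) (T : X -> (G -> R)), isometric_iso_l1 X G T.
Proof.
  intros Hatom Hbig. exists (atoms X u), (fun x v => acoord X u v x).
  split; [|split; [|split]].
  - intros a b x y v. apply acoord_lin, Hatom.
  - intros x. split; [|split].
    + exists (vnorm x). apply acoord_sum_le_norm; assumption.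
    + intros s [l [Hl ->]]. apply acoord_sum_le_norm; assumption.
    + intros b Hb. apply (norm_le_acoord_sums X u Hatom Hbig). intros l Hl. apply Hb. exists l. auto.
  - intros x y E. apply vsub_eq0, vnorm_eq0, Rle_antisym; [|apply vnorm_nonneg].
    apply (norm_le_acoord_sums X u Hatom Hbig). intros l _. right.
    rewrite finsum_abs_sumL. apply sumL_zero. intros v _.
    rewrite lf_sub, (equal_f E v), Rminus_diag, Rabs_R0 by apply acoord_lin, Hatom. reflexivity.
  - intros f Hf. destruct (acoord_surjective X u Hatom f Hf) as [x Hx]. exists x.
    apply functional_extensionality. exact Hx.
Qed.
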